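(* Let $r\ge 2$ and $n\ge 1$, let $V$ be a set of $rn$ vertices, and let $\mathcal{E}$ be the set of all $r$-element subsets of $V$. Choose elements of $\mathcal{E}$ one at a time in a uniformly random order (without repetition), stopping as soon as every vertex of $V$ lies in at least one chosen element; let $G_\omega$ be the resulting $r$-uniform hypergraph on $V$. Then the expected number of matchings in $G_\omega$ is $$\frac{(rn)!}{(r!)^n\, n!}\sum_{i=1}^r (-1)^{i-1}\frac{\binom{r}{i}}{\binom{\binom{nr}{r}-\binom{nr-i}{r}+n-1}{n}}.$$
   Context: A matching in an $r$-uniform hypergraph on vertex set $V$ is a set $M$ of its edges such that every vertex of $V$ lies in exactly one edge of $M$. *)

From mathcomp Require Import all_boot all_order all_algebra all_fingroup.
Set Implicit Arguments. Unset Strict Implicit. Unset Printing Implicit Defensive.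
Import GRing.Theory Num.Theory.

Definition all_edges (r n : nat) : {set {set 'I_(r * n)}} :=
  [set A : {set 'I_(r * n)} | #|A| == r].

Definition nedges (r n : nat) : nat := #|all_edges r n|.

(* A uniformly random order of E is a uniformly random permutation
   sigma of 'I_N; the k-th chosen edge is enum_val (sigma k). *)
Definition kth_edge (r n : nat) (sigma : {perm 'I_(nedges r n)})
  (k : 'I_(nedges r n)) : {set 'I_(r * n)} :=
  @enum_val _ (mem (all_edges r n)) (sigma k).

Definition prefix_edges (r n : nat) (sigma : {perm 'I_(nedges r n)}) (t : nat)
  : {set {set 'I_(r * n)}} :=
  [set kth_edge sigma k | k : 'I_(nedges r n) & (k < t)%N].

Definition covers (r n : nat) (H : {set {set 'I_(r * n)}}) : bool :=
  [forall v : 'I_(r * n), [exists e in H, v \in e]].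

Definition stop_time (r n : nat) (sigma : {perm 'I_(nedges r n)}) : nat :=
  find (fun t => covers (prefix_edges sigma t)) (iota 0 (nedges r n).+1).

Definition G_omega (r n : nat) (sigma : {perm 'I_(nedges r n)})
  : {set {set 'I_(r * n)}} :=
  prefix_edges sigma (stop_time sigma).

Definition is_matching (r n : nat) (M : {set {set 'I_(r * n)}}) : bool :=
  [forall v : 'I_(r * n), #|[set e in M | v \in e]| == 1%N].

Definition num_matchings (r n : nat) (H : {set {set 'I_(r * n)}}) : nat :=
  #|[set M : {set {set 'I_(r * n)}} | (M \subset H) && is_matching M]|.

Definition expected_matchings (r n : nat) : rat :=
  ((\sum_(sigma : {perm 'I_(nedges r n)}) (num_matchings (G_omega sigma))%:R)
     / (nedges r n)`!%:R)%R.

From mathcomp Require Import all_boot all_order all_algebra all_fingroup.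
From mathcomp Require Import zify ring.
Set Implicit Arguments. Unset Strict Implicit. Unset Printing Implicit Defensive.
Import GRing.Theory Num.Theory.

(* A perfect matching M lies in G_omega exactly when some vertex v is covered
   no earlier than the last edge of M; v then lies in that last edge e, so these
   events are disjoint as e ranges over M.  For a nonempty S included in e, every
   vertex of S is late iff e comes after the other n - 1 edges of M and before the
   other K - 1 edges meeting S, where K = C(nr, r) - C(nr - |S|, r); in a uniformly
   random order this has probability (n-1)! (K-1)! / (n+K-1)! = 1 / (n C(K+n-1, n)).
   Inclusion-exclusion over S, and summing over the (rn)! / ((r!)^n n!) perfect
   matchings, gives the expectation. *)

Lemma forall_setU1 (T : finType) x (A : {set T}) (P : pred T) :
  [forall y in x |: A, P y] = P x && [forall y in A, P y].
Proof.
apply/forallP/andP => [H | [Px /forallP H] y].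
  split; first by have := H x; rewrite setU11.
  by apply/forallP => y; apply/implyP => yA; have := H y; rewrite in_setU1 yA orbT.
by rewrite in_setU1; case: eqP => [-> | _] /=; [exact: Px | exact: H].
Qed.

Lemma forall_imset (T1 T2 : finType) (f : T1 -> T2) (A : {set T1}) (P : pred T2) :
  [forall y in f @: A, P y] = [forall x in A, P (f x)].
Proof.
apply/forallP/forallP => H x; apply/implyP.
  by move=> xA; have := H (f x); rewrite imset_f.
by case/imsetP=> y yA ->; have := H y; rewrite yA.
Qed.

Lemma forall_setD1 (T : finType) x (A : {set T}) (P : pred T) :
  P x -> [forall y in A :\ x, P y] = [forall y in A, P y].
Proof.
move=> Px; apply/forallP/forallP => H y; apply/implyP => yA.
  by have [-> // | yx] := eqVneq y x; apply: (implyP (H y)); rewrite in_setD1 yx.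
by apply: (implyP (H y)); move: yA; rewrite in_setD1 => /andP[].
Qed.

Section OrderPatterns.
Variable N : nat.
Implicit Types (A B Y : {set 'I_N}) (q : {perm 'I_N}) (e x y z : 'I_N).

Lemma perm_leqNgeq q x y : x != y -> (q x <= q y) = ~~ (q y <= q x).
Proof. by move=> xy; rewrite -ltnNge ltn_neqAle (inj_eq val_inj) (inj_eq perm_inj) xy. Qed.

Definition perms_min_at Y y := [set q : {perm 'I_N} | [forall x in Y, q y <= q x]].

Lemma card_perms_min_at_le Y y z : y \in Y -> z \in Y ->
  #|perms_min_at Y z| <= #|perms_min_at Y y|.
Proof.
move=> yY zY; rewrite -(card_imset _ (mulgI (tperm z y))).
apply/subset_leq_card/subsetP => _ /imsetP[q + ->]; rewrite inE => /forallP qmin.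
rewrite inE; apply/forallP => x; apply/implyP => xY.
have tY : tperm z y x \in Y by case: tpermP.
by rewrite !permM tpermR; apply: (implyP (qmin _)).
Qed.

Lemma card_perms_min_at Y y : y \in Y -> #|perms_min_at Y y| * #|Y| = N`!.
Proof.
move=> yY; rewrite -card_Sn mulnC -sum_nat_const.
transitivity (\sum_(z in Y) #|perms_min_at Y z|).
  by apply: eq_bigr => z zY; apply/eqP; rewrite eqn_leq !card_perms_min_at_le.
under eq_bigr => z _ do rewrite -sum1_card big_mkcond.
rewrite exchange_big -[#|{perm _}|]sum1_card; apply: eq_bigr => q _.
have [z0 z0Y z0min] := arg_minnP (fun z => q z) yY.
rewrite (bigD1 z0) //= big1 => [|z /andP[zY zz0]]; rewrite inE.
  by rewrite ifT //; apply/forallP => x; apply/implyP; exact: z0min.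
rewrite ifF //; apply/negbTE/forallP => /(_ z0) /implyP /(_ z0Y).
by rewrite perm_leqNgeq // z0min.
Qed.

Definition perms_between A e B :=
  [set q : {perm 'I_N} | [forall a in A, q a <= q e] && [forall b in B, q e <= q b]].

Lemma card_perms_between_split A B e x : x != e ->
  #|perms_between A e B| = #|perms_between (x |: A) e B| + #|perms_between A e (x |: B)|.
Proof.
move=> xe; rewrite -(cardsID [set q : {perm 'I_N} | q x <= q e] (perms_between A e B)).
congr (_ + _); apply: eq_card => q; rewrite !inE !forall_setU1.
  by rewrite andbC andbA.
by rewrite [q e <= q x]perm_leqNgeq 1?eq_sym // andbCA.
Qed.

Lemma card_perms_between A B e : e \notin A -> e \notin B -> [disjoint A & B] ->
  #|perms_between A e B| * (#|A| + #|B|).+1`! = N`! * #|A|`! * #|B|`!.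
Proof.
move cA : #|A| => k; elim: k A B cA => [|k IH] A B cA eA eB dAB.
  have -> : perms_between A e B = perms_min_at (e |: B) e.
    apply/setP => q; rewrite !inE forall_setU1 leqnn (cards0_eq cA) /=.
    by case: forallP => [// | []] a; rewrite inE.
  have := card_perms_min_at (setU11 e B); rewrite cardsU1 eB add1n => <-.
  by rewrite factS fact0 muln1 mulnA.
have [x xA] : exists x, x \in A by apply/set0Pn; rewrite -card_gt0 cA.
set A' := A :\ x.
have cA' : #|A'| = k by apply/eqP; rewrite -eqSS -cA (cardsD1 x A) xA.
have eA' : e \notin A' by rewrite in_setD1 negb_and eA orbT.
have xe : x != e by apply: contraNneq eA => <-.
have dA'B : [disjoint A' & B] by apply: disjointWl dAB; apply: subsetDl.
have dA'xB : [disjoint A' & x |: B].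
  apply/pred0P => y /=; rewrite in_setU1 in_setD1.
  by case: eqP => //= _; apply: (pred0P dAB).
have eBx : e \notin x |: B by rewrite in_setU1 negb_or eq_sym xe.
have := IH A' B cA' eA' eB dA'B.
rewrite (@card_perms_between_split A' B e x xe) setD1K //.
have := IH A' (x |: B) cA' eA' eBx dA'xB.
rewrite cardsU1 (disjointFr dAB xA) add1n addnS.
set P := #|perms_between A e B|; set P2 := #|perms_between A' e _|; set b := #|B|.
move=> count_xB count_B; apply/eqP; rewrite -(eqn_add2r (P2 * (k + b).+2`!)) -mulnDl count_xB.
rewrite factS mulnCA count_B !factS; apply/eqP; ring.
Qed.

Lemma card_perms_between_bin A B e : e \notin A -> e \notin B -> [disjoint A & B] ->
  #|perms_between A e B| * (#|A|.+1 * 'C((#|A| + #|B|).+1, #|A|.+1)) = N`!.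
Proof.
move=> eA eB dAB; have := card_perms_between eA eB dAB.
set a := #|A|; set b := #|B|.
rewrite -(bin_fact (leq_addr b a : a.+1 <= (a + b).+1)) subSS addKn factS => count.
apply/eqP; rewrite -(eqn_pmul2r (fact_gt0 a)) -(eqn_pmul2r (fact_gt0 b)).
by rewrite -count; apply/eqP; ring.
Qed.

End OrderPatterns.

Section PerfectMatchings.
Variables (T : finType) (r : nat).
Hypothesis r_gt0 : 0 < r.
Implicit Types (W e f g : {set T}) (M : {set {set T}}) (v x : T).

Lemma edge_through_uniq M v f g : #|[set e in M | v \in e]| == 1 ->
  f \in M -> g \in M -> v \in f -> v \in g -> f = g.
Proof.
case/cards1P => a Ma fM gM vf vg.
have : f \in [set e in M | v \in e] by rewrite inE fM vf.
have : g \in [set e in M | v \in e] by rewrite inE gM vg.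
by rewrite Ma !inE => /eqP -> /eqP ->.
Qed.

Definition perfect_matchings W := [set M : {set {set T}} |
  [forall e in M, (#|e| == r) && (e \subset W)] &&
  [forall v in W, #|[set e in M | v \in e]| == 1]].

Lemma card_perfect_matching W M : M \in perfect_matchings W -> #|M| * r = #|W|.
Proof.
rewrite inE => /andP[/forallP Mr /forallP MW].
rewrite -sum_nat_const -sum1_card; transitivity (\sum_(e in M) #|e|).
  by apply: eq_bigr => e eM; have /andP[/eqP -> _] := implyP (Mr e) eM.
under eq_bigr => e _ do rewrite -sum1_card.
rewrite (exchange_big_dep (mem W)) /= => [|e v eM ve]; last first.
  by have /andP[_ /subsetP->] := implyP (Mr e) eM.
apply: eq_bigr => v vW; rewrite sum1_card -[RHS](eqP (implyP (MW v) vW)).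
by apply: eq_card => e; rewrite !inE.
Qed.

Lemma perfect_matchings0 : perfect_matchings set0 = [set set0].
Proof.
apply/setP => M; rewrite !inE; apply/idP/eqP => [/andP[/forallP Mr _] | ->].
  apply/setP => e; rewrite inE; apply/negbTE/negP => eM.
  have /andP[/eqP er] := implyP (Mr e) eM; rewrite subset0 => /eqP e0.
  by move: r_gt0; rewrite -er e0 cards0.
by apply/andP; split; apply/forallP => y; rewrite inE.
Qed.

Lemma perfect_matchingsD1 W M e : e \in M -> M \in perfect_matchings W ->
  M :\ e \in perfect_matchings (W :\: e).
Proof.
move=> eM; rewrite !inE => /andP[/forallP Mr /forallP MW].
apply/andP; split; apply/forallP => f; apply/implyP.
  rewrite !inE => /andP[fe fM]; have /andP[-> /subsetP fW] := implyP (Mr f) fM.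
  apply/subsetP => v vf; rewrite inE fW // andbT; apply: contraNN fe => ve.
  apply/eqP; exact: edge_through_uniq (implyP (MW v) (fW v vf)) fM eM vf ve.
rewrite inE => /andP[fe fW]; rewrite -(eqP (implyP (MW f) fW)).
by apply/eqP/eq_card => g; rewrite !inE; case: eqP => [->|_] /=; rewrite ?(negbTE fe) ?andbF.
Qed.

Lemma perfect_matchingsU1 W M e : #|e| = r -> e \subset W ->
  M \in perfect_matchings (W :\: e) -> e |: M \in perfect_matchings W.
Proof.
move=> er eW; rewrite !inE => /andP[/forallP Mr /forallP MW].
apply/andP; split; apply/forallP => f; apply/implyP.
  rewrite in_setU1 => /orP[/eqP -> | fM]; first by rewrite er eqxx eW.
  have /andP[-> fWe] := implyP (Mr f) fM.
  exact: subset_trans fWe (subsetDl _ _).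
move=> fW; have [fe | fe] := boolP (f \in e).
  apply/cards1P; exists e; apply/setP => g; rewrite !inE.
  case: eqP => [-> | ge] /=; first by rewrite fe.
  apply/negbTE/andP => -[gM fg]; have /andP[_ /subsetP/(_ f fg)] := implyP (Mr g) gM.
  by rewrite inE fe.
have fWe : f \in W :\: e by rewrite inE fe fW.
rewrite -(eqP (implyP (MW f) fWe)); apply/eqP; apply: eq_card => g; rewrite !inE.
by case: eqP => [->|_] /=; rewrite ?(negbTE fe) ?andbF.
Qed.

Lemma card_perfect_matchings_with W e : #|e| = r -> e \subset W ->
  #|[set M in perfect_matchings W | e \in M]| = #|perfect_matchings (W :\: e)|.
Proof.
move=> er eW.
have eN M : M \in perfect_matchings (W :\: e) -> e \notin M.
  rewrite inE => /andP[/forallP Mr _]; apply/negP => eM.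
  have /andP[_ /subsetP eWe] := implyP (Mr e) eM.
  have [v ve] : exists v, v \in e by apply/set0Pn; rewrite -card_gt0 er.
  by have := eWe v ve; rewrite inE ve.
rewrite -[#|perfect_matchings _|](card_in_imset (f := fun M => e |: M)).
  apply: eq_card => M; rewrite [M \in [set _ in _ | _]]inE.
  apply/andP/imsetP => [[Mm eM] | [M' M'm ->]].
    by exists (M :\ e); [exact: perfect_matchingsD1 | rewrite setD1K].
  by split; [exact: perfect_matchingsU1 | exact: setU11].
move=> M1 M2 M1m M2m /(congr1 (fun M => M :\ e)) /=.
by rewrite !setU1K ?eN.
Qed.

Definition edges_through W x := [set e : {set T} | [&& x \in e, e \subset W & #|e| == r]].

Lemma card_edges_through W x : x \in W -> #|edges_through W x| = 'C(#|W|.-1, r.-1).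
Proof.
move=> xW; rewrite (cardsD1 x W) xW add1n -cards_draws.
rewrite -(card_in_imset (f := fun e => e :\ x)) => [|e1 e2]; last first.
  by rewrite !inE => /and3P[x1 _ _] /and3P[x2 _ _] e12; rewrite -(setD1K x1) -(setD1K x2) e12.
apply: eq_card => A; rewrite inE; apply/imsetP/andP => [[e] | [AWx /eqP Ar]].
  rewrite inE => /and3P[xe eW /eqP er] ->; split; first exact: setSD.
  by rewrite -er (cardsD1 x e) xe.
have xA : x \notin A by apply/negP => /(subsetP AWx); rewrite !inE eqxx.
exists (x |: A); last by rewrite setU1K.
rewrite inE setU11 cardsU1 xA Ar add1n prednK // subUset sub1set xW.
by rewrite (subset_trans AWx (subsetDl _ _)) eqxx.
Qed.

Lemma card_perfect_matchings_sum W x : x \in W ->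
  #|perfect_matchings W| =
  \sum_(e in edges_through W x) #|[set M in perfect_matchings W | e \in M]|.
Proof.
move=> xW; rewrite -sum1_card (eq_bigr (fun M => \sum_(e in edges_through W x) (e \in M : nat))).
  rewrite exchange_big /=; apply: eq_bigr => e _.
  by rewrite -big_mkcondr sum1_card; apply: eq_card => M; rewrite [M \in [set _ in _ | _]]inE.
move=> M; rewrite inE => /andP[/forallP Mr /forallP MW].
rewrite -big_mkcondr sum1_card -(eqP (implyP (MW x) xW)) /=.
apply: eq_card => e; rewrite inE [in RHS]unfold_in /= !inE andbC.
case eM: (e \in M); rewrite ?andbF //=.
by have /andP[-> ->] := implyP (Mr e) eM; rewrite !andbT.
Qed.

Lemma card_perfect_matchings k W : #|W| = r * k ->
  #|perfect_matchings W| * (r`! ^ k * k`!) = (r * k)`!.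
Proof.
elim: k W => [|k IH] W Wrk.
  by move: Wrk; rewrite muln0 => /cards0_eq ->; rewrite perfect_matchings0 cards1.
have [x xW] : exists x, x \in W by apply/set0Pn; rewrite -card_gt0 Wrk muln_gt0 r_gt0.
have fiber e : e \in edges_through W x ->
    #|[set M in perfect_matchings W | e \in M]| * (r`! ^ k * k`!) = (r * k)`!.
  rewrite inE => /and3P[_ eW /eqP er]; rewrite card_perfect_matchings_with //.
  by apply: IH; rewrite cardsD (setIidPr eW) er Wrk mulnS addKn.
have by_edge_through_x :
    #|perfect_matchings W| * (r`! ^ k * k`!) = 'C(r * k + r.-1, r.-1) * (r * k)`!.
  rewrite (card_perfect_matchings_sum xW) big_distrl /= (eq_bigr _ fiber) sum_nat_const.
  by rewrite card_edges_through // Wrk mulnS; congr ('C(_, _) * _); lia.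
have bin := bin_fact (leq_addl (r * k) r.-1); rewrite addnK in bin.
have rS : r * k.+1 = (r * k + r.-1).+1 by rewrite mulnS; lia.
have rF : r`! = r * r.-1`! by rewrite -[in LHS](prednK r_gt0) factS prednK.
rewrite expnS factS [LHS](_ : _ = #|perfect_matchings W| * (r`! ^ k * k`!) * (r`! * k.+1)).
  by rewrite by_edge_through_x rF rS factS -rS -bin; ring.
by ring.
Qed.

End PerfectMatchings.

Section InclusionExclusion.
Local Open Scope ring_scope.
Variables (T U : finType) (R : comRingType).
Implicit Types (A S : {set T}).

Lemma prod_natr_bool A (b : pred T) :
  \prod_(w in A) (b w)%:R = [forall w in A, b w]%:R :> R.
Proof.
have [/forallP Ab | /forallPn[w]] := boolP [forall w in A, b w].
  by apply: big1 => w wA; have := implyP (Ab w) wA => ->.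
by rewrite negb_imply => /andP[wA /negbTE bw]; rewrite (bigD1 w) //= bw mul0r.
Qed.

Lemma prod1B_powerset A (f : T -> R) :
  \prod_(w in A) (1 - f w) = \sum_(S in powerset A) (-1) ^+ #|S| * \prod_(w in S) f w.
Proof.
move cA : #|A| => k; elim: k A cA => [|k IH] A cA.
  by rewrite (cards0_eq cA) powerset0 big_set1 !big_set0 cards0 mulr1.
have [x xA] : exists x, x \in A by apply/set0Pn; rewrite -card_gt0 cA.
have cAx : #|A :\ x| = k by apply/eqP; rewrite -eqSS -cA (cardsD1 x A) xA.
rewrite (big_setD1 x xA) /= IH // [RHS](bigID (fun S => x \in S)) /= addrC mulrBl mul1r.
congr (_ + _).
  apply: eq_bigl => S; rewrite !powersetE subsetD1 andbC.
  by case: (x \in S); rewrite ?andbF.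
rewrite big_distrr -sumrN /=.
rewrite [RHS](reindex_onto (fun S => x |: S) (fun S => S :\ x)) /= => [|S]; last first.
  by rewrite powersetE => /andP[_ xS]; rewrite setD1K.
apply: eq_big => [S | S]; rewrite !powersetE.
  apply/idP/andP => [SAx | [/andP[SA _] /eqP <-]]; last by rewrite setSD.
  have xS : x \notin S by apply/negP => /(subsetP SAx); rewrite !inE eqxx.
  split; last by rewrite setU1K.
  by rewrite setU11 andbT subUset sub1set xA (subset_trans SAx (subsetDl _ _)).
move=> SAx; have xS : x \notin S by apply/negP => /(subsetP SAx); rewrite !inE eqxx.
by rewrite cardsU1 xS big_setU1 //= exprS; ring.
Qed.

Lemma sum_powerset_card (V : nmodType) A (g : nat -> V) :
  \sum_(S in powerset A) g #|S| = \sum_(i < #|A|.+1) g i *+ 'C(#|A|, i).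
Proof.
rewrite (partition_big (fun S => inord #|S| : 'I_#|A|.+1) xpredT) //=.
apply: eq_bigr => i _; rewrite -cards_draws -sumr_const.
have SA_lt S : S \subset A -> (#|S| < #|A|.+1)%N by rewrite ltnS; apply: subset_leq_card.
apply: eq_big => S; rewrite powersetE.
  rewrite inE; have [SA | //] := boolP (S \subset A).
  by apply/eqP/eqP => [<- | Si]; [rewrite inordK ?SA_lt | apply: val_inj; rewrite /= inordK ?SA_lt].
by move=> /andP[SA /eqP <-]; rewrite inordK ?SA_lt.
Qed.

Lemma natr_card_set (Q : pred U) : #|[set u | Q u]|%:R = \sum_u (Q u)%:R :> R.
Proof.
by rewrite -sum1_card natr_sum big_mkcond; apply: eq_bigr => u _; rewrite inE; case: (Q u).
Qed.

Lemma card_exists_incl_excl A (P : T -> pred U) (h : nat -> R) :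
  (forall S, S \subset A -> S != set0 -> #|[set u | [forall w in S, P w u]]|%:R = h #|S|) ->
  #|[set u | [exists w in A, P w u]]|%:R =
  \sum_(1 <= i < #|A|.+1) (-1) ^+ (i - 1) * 'C(#|A|, i)%:R * h i.
Proof.
move=> hS.
have pointwise u : 1 - [exists w in A, P w u]%:R =
    \sum_(S in powerset A) (-1) ^+ #|S| * [forall w in S, P w u]%:R :> R.
  have -> : 1 - [exists w in A, P w u]%:R = [forall w in A, ~~ P w u]%:R :> R.
    by rewrite -negb_exists_in; case: [exists _ in _, _]; rewrite ?subrr ?subr0.
  rewrite -prod_natr_bool (eq_bigr (fun w => 1 - (P w u)%:R)) => [|w _]; last first.
    by case: (P w u); rewrite ?subrr ?subr0.
  by rewrite prod1B_powerset; apply: eq_bigr => S _; rewrite prod_natr_bool.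
(* [c] extends [h] to the empty [S], which every [u] satisfies. *)
pose c i := if i == 0%N then #|U|%:R else h i.
have hc S : S \subset A -> #|[set u | [forall w in S, P w u]]|%:R = c #|S|.
  rewrite /c cards_eq0; have [-> _ | S0 SA] := eqVneq S set0; last exact: hS.
  rewrite -cardsT; congr (_%:R); apply: eq_card => u.
  by rewrite !inE; apply/forallP => w; rewrite inE.
have : #|U|%:R - #|[set u | [exists w in A, P w u]]|%:R =
    \sum_(S in powerset A) (-1) ^+ #|S| * c #|S|.
  rewrite natr_card_set -[#|U|]sum1_card natr_sum -sumrB (eq_bigr _ (fun u _ => pointwise u)).
  rewrite exchange_big /=; apply: eq_bigr => S; rewrite powersetE => SA.
  by rewrite -mulr_sumr -natr_card_set hc.
rewrite (sum_powerset_card A (fun i => (-1) ^+ i * c i)) big_ord_recl /c /= expr0 mul1r.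
rewrite bin0 mulr1n => /addrI/(congr1 -%R); rewrite opprK => ->.
rewrite big_add1 /= big_mkord -sumrN; apply: eq_bigr => i _.
by rewrite (_ : bump 0 i = i.+1) // subSS subn0 exprS -mulNrn -mulr_natl; ring.
Qed.

End InclusionExclusion.

Section RandomCover.
Variables (r n : nat).
Hypotheses (r_gt0 : 0 < r) (n_gt0 : 0 < n).

Local Notation V := 'I_(r * n).
Local Notation E := (all_edges r n).
Local Notation N := (nedges r n).
Local Notation PM := (perfect_matchings r [set: V]).
Implicit Types (s : {perm 'I_N}) (x y e S : {set V}) (M X : {set {set V}}) (v w : V).

Lemma card_all_edges : #|E| = 'C(r * n, r).
Proof. by rewrite card_draws card_ord. Qed.

Lemma covers_all_edges : covers E.
Proof.
apply/forallP => v; have : 0 < #|[set A : {set V} | A \subset [set~ v] & #|A| == r.-1]|.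
  by rewrite cards_draws bin_gt0 cardsC1 card_ord; have := leq_pmulr r n_gt0; lia.
case/card_gt0P => A; rewrite inE => /andP[/subsetP Av /eqP Ar].
have vA : v \notin A by apply/negP => /Av; rewrite !inE eqxx.
by apply/existsP; exists (v |: A); rewrite setU11 andbT inE cardsU1 vA Ar add1n prednK.
Qed.

Lemma perfect_matchingsT M : (M \in PM) = (M \subset E) && is_matching M.
Proof.
rewrite inE; congr (_ && _).
  apply/forallP/subsetP => [H e eM | H e]; last first.
    by apply/implyP => /H; rewrite inE subsetT andbT.
  by rewrite inE; have /andP[] := implyP (H e) eM.
by apply/forallP/forallP => H v; have := H v; rewrite inE.
Qed.

Lemma perfect_matching_sub M : M \in PM -> M \subset E.
Proof. by rewrite perfect_matchingsT => /andP[]. Qed.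

Lemma card_matching M : M \in PM -> #|M| = n.
Proof.
move/card_perfect_matching; rewrite cardsT card_ord mulnC => /eqP.
by rewrite eqn_pmul2l // => /eqP.
Qed.

(* [x0E] only provides the default element required by [enum_rank_in]. *)
Variables (x0 : {set V}) (x0E : x0 \in E).

Definition edge_rank x : 'I_N := enum_rank_in x0E x.
Definition edge_time s x : 'I_N := (s^-1)%g (edge_rank x).

Lemma edge_rank_inj : {in E &, injective edge_rank}.
Proof. by move=> x y; apply: enum_rank_in_inj. Qed.

Lemma edge_time_inj s : {in E &, injective (edge_time s)}.
Proof. by move=> x y xE yE /perm_inj; apply: edge_rank_inj. Qed.

Lemma card_edge_rank X : X \subset E -> #|edge_rank @: X| = #|X|.
Proof.
by move=> XE; apply: card_in_imset => x y /(subsetP XE) xE /(subsetP XE); apply: edge_rank_inj.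
Qed.

Lemma edge_rank_notin X e : X \subset E -> e \in E -> edge_rank e \notin edge_rank @: (X :\ e).
Proof.
move=> XE eE; apply/imsetP => -[y /setD1P[ye yX] eq_rank]; move: ye.
by rewrite -(edge_rank_inj eE (subsetP XE y yX) eq_rank) eqxx.
Qed.

Lemma prefix_edgesE s t : prefix_edges s t = [set x in E | edge_time s x < t].
Proof.
apply/setP => x; rewrite inE; apply/imsetP/andP => [[k] | [xE xt]].
  by rewrite inE => kt ->; rewrite /edge_time /edge_rank /kth_edge enum_valK_in permK enum_valP.
by exists (edge_time s x); rewrite ?inE // /kth_edge /edge_time permKV enum_rankK_in.
Qed.

Lemma covers_stop_time s : covers (prefix_edges s (stop_time s)).
Proof.
have Ncov : has (fun t => covers (prefix_edges s t)) (iota 0 N.+1).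
  apply/hasP; exists N; first by rewrite mem_iota ltnSn.
  rewrite prefix_edgesE (_ : [set x in E | _] = E) ?covers_all_edges //.
  by apply/setP => x; rewrite inE andb_idr.
by have := nth_find 0 Ncov; rewrite nth_iota // -[X in _ < X](size_iota 0 N.+1) -has_find.
Qed.

Lemma stop_time_min s t : t < stop_time s -> ~~ covers (prefix_edges s t).
Proof.
move=> lt_t; have := before_find 0 lt_t; rewrite nth_iota => [-> // |].
by apply: leq_trans lt_t _; rewrite -[X in _ <= X](size_iota 0 N.+1) find_size.
Qed.

Definition late_vertex M s v :=
  [forall x in E, (v \in x) ==> [forall y in M, edge_time s y <= edge_time s x]].

Lemma sub_G_omegaE s M : M \subset E -> M != set0 ->
  (M \subset G_omega s) = [exists v, late_vertex M s v].
Proof.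
move=> ME M0; rewrite /G_omega prefix_edgesE; apply/idP/existsP => [MG | [v /forallP vlate]].
  have M0' : 0 < #|M| by rewrite card_gt0.
  have [y0 y0M tmax] := eq_bigmax_cond (fun y => nat_of_ord (edge_time s y)) M0'.
  have := subsetP MG y0 y0M; rewrite inE => /andP[_ /stop_time_min].
  rewrite negb_forall => /existsP[v]; rewrite negb_exists => /forallP vfree.
  exists v; apply/forallP => x; apply/implyP => xE; apply/implyP => vx.
  apply/forallP => y; apply/implyP => yM.
  have := vfree x; rewrite prefix_edgesE inE xE vx andbT /= -leqNgt; apply: leq_trans.
  by rewrite -tmax; apply: leq_bigmax_cond.
apply/subsetP => y yM; rewrite inE (subsetP ME y yM) /=.
have /existsP[x /andP[]] := forallP (covers_stop_time s) v.
rewrite prefix_edgesE inE => /andP[xE xt] vx.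
have /forallP/(_ y) := implyP (implyP (vlate x) xE) vx; rewrite yM /=.
by move/leq_ltn_trans; apply.
Qed.

Lemma late_vertex_max M s e w : M \subset E -> e \in M -> w \in e ->
  late_vertex M s w -> forall y, y \in M -> edge_time s y <= edge_time s e.
Proof.
move=> ME eM we /forallP/(_ e); rewrite (subsetP ME e eM) we /= => /forallP tmax y yM.
exact: implyP (tmax y) yM.
Qed.

Lemma exists_late_vertex_sum M s : M \in PM ->
  [exists v, late_vertex M s v] = \sum_(e in M) [exists w in e, late_vertex M s w] :> nat.
Proof.
move=> MPM; have /andP[ME /forallP Mm] : (M \subset E) && is_matching M.
  by rewrite -perfect_matchingsT.
have [/existsP[v vlate] | nolate] := boolP [exists v, late_vertex M s v]; last first.
  rewrite big1 // => e _; apply/eqP; rewrite eqb0; apply: contra nolate.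
  by case/existsP=> w /andP[_ wlate]; apply/existsP; exists w.
have /cards1P[a Ma] := Mm v.
have : a \in [set e in M | v \in e] by rewrite Ma set11.
rewrite inE => /andP[aM va].
rewrite (bigD1 a) //= big1 => [|e /andP[eM ea]].
  by rewrite (_ : [exists w in a, _]) //; apply/existsP; exists v; rewrite va.
apply/eqP; rewrite eqb0; apply: contra ea => /existsP[w /andP[we wlate]].
have le_ae := late_vertex_max ME eM we wlate aM.
have le_ea := late_vertex_max ME aM va vlate eM.
apply/eqP; apply: (@edge_time_inj s); rewrite ?(subsetP ME) //.
by apply/val_inj/eqP; rewrite eqn_leq le_ae le_ea.
Qed.

Definition edges_meeting (S : {set V}) := [set x in E | ~~ [disjoint x & S]].

Lemma card_edges_meeting S : #|edges_meeting S| = 'C(n * r, r) - 'C(n * r - #|S|, r).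
Proof.
have : #|edges_meeting S| + #|[set x : {set V} | x \subset ~: S & #|x| == r]| = #|E|.
  rewrite -(cardsID [set x : {set V} | ~~ [disjoint x & S]] E); congr (_ + _); apply: eq_card => x.
    by rewrite !inE andbC.
  by rewrite !inE negbK disjoints_subset andbC.
rewrite card_all_edges cards_draws [#|~: S|]cardsCs setCK card_ord [n * r]mulnC => <-.
by rewrite addnK.
Qed.

Lemma forall_late_vertexE M s e S : M \in PM -> e \in M -> S \subset e -> S != set0 ->
  [forall w in S, late_vertex M s w] =
  [forall y in M :\ e, edge_time s y <= edge_time s e] &&
  [forall x in edges_meeting S :\ e, edge_time s e <= edge_time s x].
Proof.
move=> MPM eM Se S0; have ME := perfect_matching_sub MPM.
rewrite !forall_setD1 //; apply/forallP/andP => [late | [/forallP before /forallP after] w].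
  have [w0 w0S] := set0Pn _ S0.
  split; apply/forallP => y; apply/implyP => yM.
    exact: late_vertex_max ME eM (subsetP Se w0 w0S) (implyP (late w0) w0S) y yM.
  move: yM; rewrite inE -setI_eq0 => /andP[yE /set0Pn[w]]; rewrite inE => /andP[wy wS].
  have /forallP/(_ y) := implyP (late w) wS; rewrite yE wy /= => /forallP/(_ e).
  by rewrite eM.
apply/implyP => wS; apply/forallP => x; apply/implyP => xE; apply/implyP => wx.
apply/forallP => y; apply/implyP => yM; apply: leq_trans (implyP (before y) yM) _.
apply: (implyP (after x)); rewrite inE xE -setI_eq0; apply/set0Pn; exists w.
by rewrite inE wx wS.
Qed.

Lemma card_forall_late M e S : M \in PM -> e \in M -> S \subset e -> S != set0 ->
  #|[set s | [forall w in S, late_vertex M s w]]| * (n * 'C(#|edges_meeting S| + n - 1, n)) = N`!.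
Proof.
move=> MPM eM Se S0; have /andP[ME /forallP Mm] : (M \subset E) && is_matching M.
  by rewrite -perfect_matchingsT.
have eE := subsetP ME e eM.
have DE : edges_meeting S \subset E by apply/subsetP => x; rewrite inE => /andP[].
have eD : e \in edges_meeting S.
  rewrite inE eE -setI_eq0 (setIidPr Se); exact: S0.
have sub_E X : X \subset E -> X :\ e \subset E by move/(subset_trans (subsetDl _ _)).
set A := edge_rank @: (M :\ e); set B := edge_rank @: (edges_meeting S :\ e).
have cA : #|A| = n.-1.
  rewrite card_edge_rank ?sub_E //.
  by have := card_matching MPM; rewrite (cardsD1 e M) eM add1n => /(congr1 predn).
have cB : #|B| = #|edges_meeting S|.-1.
  rewrite card_edge_rank ?sub_E //.
  by rewrite [in RHS](cardsD1 e) eD.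
have dAB : [disjoint A & B].
  apply/pred0P => a /=; apply/negbTE/andP.
  case=> /imsetP[y /setD1P[ye yM] ->] /imsetP[x /setD1P[_ xD] eq_rank].
  have yx := edge_rank_inj (subsetP ME y yM) (subsetP DE x xD) eq_rank.
  move: xD; rewrite -yx inE -setI_eq0.
  case/andP => _ /set0Pn[w]; rewrite inE => /andP[wy wS]; move/eqP: ye; apply.
  exact: edge_through_uniq (Mm w) yM eM wy (subsetP Se w wS).
have -> : [set s | [forall w in S, late_vertex M s w]] = ((perms_between A (edge_rank e) B)^-1)%g.
  by apply/setP => s; rewrite mem_invg !inE (forall_late_vertexE s MPM eM Se S0) !forall_imset.
have -> : n * 'C(#|edges_meeting S| + n - 1, n) = #|A|.+1 * 'C((#|A| + #|B|).+1, #|A|.+1).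
  have : 0 < #|edges_meeting S| by apply/card_gt0P; exists e.
  by rewrite cA cB prednK // => D0; congr (_ * 'C(_, _)); lia.
by rewrite card_invg card_perms_between_bin ?edge_rank_notin.
Qed.

Local Open Scope ring_scope.

Lemma card_exists_late M e : M \in PM -> e \in M ->
  #|[set s | [exists w in e, late_vertex M s w]]|%:R =
  \sum_(1 <= i < r.+1) (-1) ^+ (i - 1) * 'C(r, i)%:R *
     (N`!%:R / (n * 'C('C(n * r, r) - 'C(n * r - i, r) + n - 1, n))%:R) :> rat.
Proof.
move=> MPM eM; have ME := perfect_matching_sub MPM.
have /eqP er : #|e| == r by move: (subsetP ME e eM); rewrite inE.
rewrite (card_exists_incl_excl
    (h := fun i => N`!%:R / (n * 'C('C(n * r, r) - 'C(n * r - i, r) + n - 1, n))%:R)) ?er //.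
move=> S Se S0.
have := card_forall_late MPM eM Se S0; rewrite card_edges_meeting => cd.
rewrite -cd natrM mulfK // pnatr_eq0 -lt0n.
by have := fact_gt0 N; rewrite -cd muln_gt0 => /andP[].
Qed.

Lemma card_sub_G_omega M : M \in PM ->
  #|[set s | M \subset G_omega s]|%:R = N`!%:R *
  \sum_(1 <= i < r.+1) (-1) ^+ (i - 1) * 'C(r, i)%:R /
     'C('C(n * r, r) - 'C(n * r - i, r) + n - 1, n)%:R :> rat.
Proof.
move=> MPM; have ME := perfect_matching_sub MPM.
have M0 : M != set0 by rewrite -card_gt0 card_matching.
rewrite natr_card_set.
under eq_bigr => s _ do rewrite sub_G_omegaE // exists_late_vertex_sum // natr_sum.
rewrite exchange_big /=.
under eq_bigr => e eM do rewrite -natr_card_set card_exists_late //.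
rewrite sumr_const card_matching // -(mulr_natl _ n) !mulr_sumr; apply: eq_bigr => i _.
have n0 : n%:R != 0 :> rat by rewrite pnatr_eq0 -lt0n.
by rewrite natrM invfM; move: ('C(_, n)%:R^-1 : rat) => Ci; field.
Qed.

Lemma G_omega_sub s : G_omega s \subset E.
Proof. by rewrite /G_omega prefix_edgesE; apply/subsetP => x; rewrite inE => /andP[]. Qed.

Lemma sum_num_matchings :
  \sum_(s : {perm 'I_N}) (num_matchings (G_omega s))%:R =
  \sum_(M in PM) #|[set s | M \subset G_omega s]|%:R :> rat.
Proof.
under eq_bigr => s _ do rewrite /num_matchings natr_card_set.
rewrite exchange_big /= (bigID (mem PM)) /= addrC big1 ?add0r => [|M MPM].
  apply: eq_bigr => M; rewrite natr_card_set perfect_matchingsT => /andP[_ Mm].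
  by apply: eq_bigr => s _; rewrite Mm andbT.
apply: big1 => s _; apply/eqP; rewrite pnatr_eq0 eqb0.
apply: contra MPM => /andP[MG Mm].
by rewrite perfect_matchingsT Mm (subset_trans MG (G_omega_sub s)).
Qed.

End RandomCover.

Local Open Scope ring_scope.

Theorem theorem3 (r n : nat) (hr : (2 <= r)%N) (hn : (1 <= n)%N) :
  expected_matchings r n =
  ((r * n)`!)%:R / (((r`!) ^ n * n`!)%N)%:R *
  \sum_(1 <= i < r.+1)
     (-1) ^+ (i - 1) * ('C(r, i))%:R /
     ('C('C(n * r, r) - 'C(n * r - i, r) + n - 1, n))%:R :> rat.
Proof.
have r_gt0 : (0 < r)%N by apply: leq_trans hr.
have [x0 x0E] : exists x0, x0 \in all_edges r n.
  by apply/card_gt0P; rewrite card_all_edges bin_gt0 leq_pmulr.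
rewrite /expected_matchings (sum_num_matchings x0E).
rewrite (eq_bigr _ (fun M => card_sub_G_omega r_gt0 hn x0E (M := M))) sumr_const.
rewrite -(card_perfect_matchings r_gt0 (_ : #|[set: 'I_(r * n)]| = r * n)%N) ?cardsT ?card_ord //.
have nz_fact m : m`!%:R != 0 :> rat by rewrite pnatr_eq0 -lt0n fact_gt0.
by rewrite -(mulr_natr _ #|_|) natrM; field; rewrite !nz_fact natrX expf_neq0.
Qed.
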